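(* Let $(\mathbb{X},\oplus,\otimes,\mathbb{0},\mathbb{1})$ be a linearly ordered, algebraically complete idempotent semifield, let $\bm{A}_1,\ldots,\bm{A}_m\in\mathbb{X}^{n\times n}$ be matrices and $w_1,\ldots,w_m\in\mathbb{X}$ scalars such that $\bm{B}=w_{1}(\bm{A}_{1}\oplus\bm{A}_{1}^{-})\oplus\cdots\oplus w_{m}(\bm{A}_{m}\oplus\bm{A}_{m}^{-})$ has no zero entries. Let $\mu$ be the spectral radius of $\bm{B}$ and $\bm{B}_{\mu}=\mu^{-1}\bm{B}$. Consider the problem of minimizing $\max_{1\le i\le m} w_i\, d(\bm{A}_i,\bm{x}\bm{x}^{-})$ (i.e. $\bigoplus_{i=1}^m w_i d(\bm{A}_i,\bm{x}\bm{x}^{-})$) over all regular vectors $\bm{x}\in\mathbb{X}^n$. Then the minimum value equals $\mu$, and the set of all solutions is $\{\bm{x}=\bm{B}_{\mu}^{\ast}\bm{u}:\bm{u}\in\mathbb{X}^n,\ \bm{u}\ne\bm{0}\}$.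
   Context: An idempotent semifield is a set $\mathbb{X}$ with associative, commutative operations $\oplus$ (addition) and $\otimes$ (multiplication, usually omitted in writing) with neutral elements $\mathbb{0}$ and $\mathbb{1}$, multiplication distributing over addition, idempotent addition ($x\oplus x=x$), and every nonzero $x$ having an inverse $x^{-1}$ with $xx^{-1}=\mathbb{1}$. It is assumed linearly ordered by the order $x\le y \iff x\oplus y=y$, and algebraically complete: $x^p=a$ is solvable for every $a$ and integer $p>0$, so rational powers are defined. Matrix and vector operations (including scalar multiplication) use the usual formulas with $\oplus,\otimes$ in place of $+,\times$; $\bm{0}$ is the zero vector; a vector is regular if it has no zero entries. For a nonzero column vector $\bm{x}=(x_i)$, $\bm{x}^{-}$ is the row vector with entries $x_i^{-1}$ if $x_i\ne\mathbb{0}$ and $\mathbb{0}$ otherwise. For a nonzero matrix $\bm{A}=(a_{ij})$, $\bm{A}^{-}=(a^{-}_{ij})$ with $a^{-}_{ij}=a_{ji}^{-1}$ if $a_{ji}\neq\mathbb{0}$ and $\mathbb{0}$ otherwise. The trace is $\mathrm{tr}\,\bm{A}=a_{11}\oplus\cdots\oplus a_{nn}$. The distance between square matrices is $d(\bm{A},\bm{B})=\mathrm{tr}(\bm{B}^{-}\bm{A})\oplus\mathrm{tr}(\bm{A}^{-}\bm{B})$. $\bm{I}$ is the identity matrix, $\bm{A}^0=\bm{I}$, $\bm{A}^p=\bm{A}^{p-1}\bm{A}$. The spectral radius of $\bm{A}$ of order $n$ is $\lambda=\bigoplus_{k=1}^{n}\bigoplus_{1\le i_1,\ldots,i_k\le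 n}(a_{i_1i_2}a_{i_2i_3}\cdots a_{i_ki_1})^{1/k}$. For a square matrix $\bm{M}$ of order $n$, $\bm{M}^{\ast}=\bm{I}\oplus\bm{M}\oplus\cdots\oplus\bm{M}^{n-1}$. *)

(* An idempotent semifield is modelled as a commutative
   nontrivial semiring X (comNzSemiRingType: provides 0, 1, +, *, with
   associativity, commutativity, distributivity, 0 absorbing, 0 <> 1) together
   with hypotheses (stated in the theorem) of idempotency, inverses,
   linear order and algebraic completeness.  Here + is the paper's (+)
   (oplus) and * its (x) (otimes). *)
From HB Require Import structures.
From mathcomp Require Import all_boot all_order all_algebra.
From Stdlib Require Import ClassicalEpsilon.
Set Implicit Arguments. Unset Strict Implicit. Unset Printing Implicit Defensive.
Import GRing.Theory.
Local Open Scope ring_scope.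

Section IdemSemifield.
Variable X : comNzSemiRingType.

Definition sle (x y : X) : Prop := x + y = y.

Definition sinv (x : X) : X := epsilon (inhabits 0) (fun y => x * y = 1).

(* k-th root (k > 0): some y with y^k = a (exists by algebraic completeness;
   it is unique in a linearly ordered idempotent semifield) *)
Definition sroot (k : nat) (a : X) : X := epsilon (inhabits 0) (fun y => y ^+ k = a).

Definition sinvz (x : X) : X := if x == 0 then 0 else sinv x.

Definition regular n (x : 'cV[X]_n) : Prop := forall i, x i 0 <> 0.

Definition vconj n (x : 'cV[X]_n) : 'rV[X]_n := \row_i sinvz (x i 0).

Definition mconj n (A : 'M[X]_n) : 'M[X]_n := \matrix_(i, j) sinvz (A j i).

Definition mdist n (A B : 'M[X]_n) : X :=
  \tr (mconj B *m A) + \tr (mconj A *m B).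

Definition mxpow n (A : 'M[X]_n) (p : nat) : 'M[X]_n :=
  iter p (fun M => M *m A) 1%:M.

Definition mxstar n (M : 'M[X]_n) : 'M[X]_n := \sum_(k < n) mxpow M k.

(* spectral radius:
   (+)_{k=1}^n (+)_{i_1..i_k} (a_{i1 i2} ... a_{ik i1})^{1/k};
   a cycle of length k = j.+1 is a function s : 'I_k -> 'I_n, and the
   successor of position t is ordS t (cyclically). *)
Definition specrad n (A : 'M[X]_n) : X :=
  \sum_(j < n) \sum_(s : {ffun 'I_j.+1 -> 'I_n})
     sroot j.+1 (\prod_(t < j.+1) A (s t) (s (ordS t))).

End IdemSemifield.

(* For a regular vector x the objective equals the form x^- B x, i.e. the sum
   of the terms x_k^{-1} b_kl x_l: the matrix B gathers all entries entering
   the traces.  Multiplying such terms around a cycle cancels the x's, so every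
   cycle mean of B, hence mu, is at most x^- B x.  Equality holds iff every
   term is at most mu, i.e. iff x is a subeigenvector: B_mu x <= x.  All cycles
   of B_mu have weight at most 1, so a path of length n, which must contain a
   cycle, is dominated by a shorter one and B_mu B_mu^* <= B_mu^*.  Hence the
   regular subeigenvectors are exactly the vectors B_mu^* u with u <> 0. *)
From HB Require Import structures.
From mathcomp Require Import all_boot all_order all_algebra.
From Stdlib Require Import ClassicalEpsilon.
From mathcomp Require Import ring.
Import GRing.Theory.
Local Open Scope ring_scope.
Set Implicit Arguments. Unset Strict Implicit.

Section IdempotentSemifield.
Variable X : comNzSemiRingType.
Hypothesis add_idem : forall x : X, x + x = x.
Hypothesis mul_inv : forall x : X, x != 0 -> exists y : X, x * y = 1.
Hypothesis lin_order : forall x y : X, x + y = x \/ x + y = y.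
Hypothesis alg_complete : forall (a : X) (p : nat), (0 < p)%N -> exists x : X, x ^+ p = a.

Local Notation "x <=s y" := (@sle X x y) (at level 70).
Implicit Types x y z : X.

Lemma sle_refl x : x <=s x. Proof. exact: add_idem. Qed.

Lemma sle_trans x y z : x <=s y -> y <=s z -> x <=s z.
Proof. by rewrite /sle => Hxy Hyz; rewrite -Hyz addrA Hxy. Qed.

Lemma sle_anti x y : x <=s y -> y <=s x -> x = y.
Proof. by rewrite /sle => H1 H2; rewrite -H1 addrC H2. Qed.

Lemma sle_total x y : x <=s y \/ y <=s x.
Proof. by case: (lin_order x y) => H; [right; rewrite /sle addrC | left]. Qed.

Lemma sle0 x : 0 <=s x. Proof. by rewrite /sle add0r. Qed.

Lemma sle_addl x y : x <=s x + y. Proof. by rewrite /sle addrA add_idem. Qed.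

Lemma sle_addr x y : y <=s x + y. Proof. by rewrite addrC; apply: sle_addl. Qed.

Lemma sle_add x y z : x <=s z -> y <=s z -> x + y <=s z.
Proof. by rewrite /sle => H1 H2; rewrite -addrA H2 H1. Qed.

Lemma sle_add2 x y x' y' : x <=s x' -> y <=s y' -> x + y <=s x' + y'.
Proof.
move=> H1 H2; apply: sle_add.
  exact: sle_trans H1 (sle_addl _ _).
exact: sle_trans H2 (sle_addr _ _).
Qed.

Lemma sle_mulr x y z : x <=s y -> x * z <=s y * z.
Proof. by rewrite /sle => H; rewrite -mulrDl H. Qed.

Lemma sle_mull x y z : x <=s y -> z * x <=s z * y.
Proof. by rewrite ![z * _]mulrC; apply: sle_mulr. Qed.

Lemma sle_mul2 x y x' y' : x <=s x' -> y <=s y' -> x * y <=s x' * y'.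
Proof. by move=> H1 H2; apply: sle_trans (sle_mulr y H1) (sle_mull x' H2). Qed.

Lemma sle_expr x y k : x <=s y -> x ^+ k <=s y ^+ k.
Proof.
move=> H; elim: k => [|k IH]; first by rewrite !expr0; apply: sle_refl.
by rewrite !exprS; apply: sle_mul2.
Qed.

Lemma sle_sum (I : Type) (r : seq I) (P : pred I) (F G : I -> X) :
  (forall i, P i -> F i <=s G i) ->
  \sum_(i <- r | P i) F i <=s \sum_(i <- r | P i) G i.
Proof.
move=> H; apply: (big_ind2 (fun a b => a <=s b)); last exact: H.
  exact: sle_refl.
by move=> ? ? ? ?; apply: sle_add2.
Qed.

Lemma sle_sum_bound (I : Type) (r : seq I) (P : pred I) (F : I -> X) c :
  (forall i, P i -> F i <=s c) -> \sum_(i <- r | P i) F i <=s c.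
Proof.
move=> H; apply: (big_ind (fun a => a <=s c)); last exact: H.
  exact: sle0.
by move=> ? ?; apply: sle_add.
Qed.

Lemma sle_sum_term (I : finType) (F : I -> X) i : F i <=s \sum_j F j.
Proof. by rewrite (bigD1 i) //=; apply: sle_addl. Qed.

Lemma sle_prod (I : Type) (r : seq I) (P : pred I) (F G : I -> X) :
  (forall i, P i -> F i <=s G i) ->
  \prod_(i <- r | P i) F i <=s \prod_(i <- r | P i) G i.
Proof.
move=> H; apply: (big_ind2 (fun a b => a <=s b)); last exact: H.
  exact: sle_refl.
by move=> ? ? ? ?; apply: sle_mul2.
Qed.

Lemma sum_seq_eq_term (I : eqType) (s : seq I) (F : I -> X) :
  s != [::] -> exists2 i, i \in s & \sum_(j <- s) F j = F i.
Proof.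
elim: s => // a s IH _; rewrite big_cons.
case: s IH => [|b s] IH.
  by exists a; [rewrite mem_seq1 | rewrite big_nil addr0].
have [i Hi ->] := IH isT.
case: (lin_order (F a) (F i)) => ->; first by exists a; rewrite ?mem_head.
by exists i; rewrite // in_cons Hi orbT.
Qed.

Lemma sum_eq_term (I : finType) (F : I -> X) (i0 : I) :
  exists i, \sum_j F j = F i.
Proof.
have /(sum_seq_eq_term F) [i _ Fi] : enum I != [::].
  by apply/eqP => E; have := mem_enum I i0; rewrite E.
by exists i; rewrite -Fi big_enum.
Qed.

Lemma sinvP x : x != 0 -> x * sinv x = 1.
Proof. by move=> /mul_inv; apply: epsilon_spec. Qed.

Lemma sinvP' x : x != 0 -> sinv x * x = 1.
Proof. by move=> H; rewrite mulrC sinvP. Qed.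

Lemma mul_neq0 x y : x != 0 -> y != 0 -> x * y != 0.
Proof.
move=> Hx Hy; apply/eqP => E.
have : (sinv x * x) * (y * sinv y) = 0 by rewrite mulrA -(mulrA _ x) E mulr0 mul0r.
by rewrite sinvP' // sinvP // mulr1 => /eqP; rewrite oner_eq0.
Qed.

Lemma mul_neq0l x y : x * y != 0 -> x != 0.
Proof. by apply: contraNneq => ->; rewrite mul0r. Qed.

Lemma expr_neq0 x k : x != 0 -> x ^+ k != 0.
Proof.
move=> Hx; elim: k => [|k IH]; first by rewrite expr0 oner_eq0.
by rewrite exprS mul_neq0.
Qed.

Lemma sinv_neq0 x : x != 0 -> sinv x != 0.
Proof.
move=> H; apply/eqP => E; have := sinvP H; rewrite E mulr0 => /eqP.
by rewrite eq_sym oner_eq0.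
Qed.

Lemma sinv_uniq x y : x * y = 1 -> sinv x = y.
Proof.
move=> H; have Hx : x != 0.
  by apply/eqP => x0; move: H; rewrite x0 mul0r => /eqP; rewrite eq_sym oner_eq0.
by rewrite -[sinv x]mulr1 -H mulrA sinvP' // mul1r.
Qed.

Lemma sinvM x y : x != 0 -> y != 0 -> sinv (x * y) = sinv x * sinv y.
Proof. by move=> Hx Hy; apply: sinv_uniq; rewrite mulrACA !sinvP // mulr1. Qed.

Lemma sinvK x : x != 0 -> sinv (sinv x) = x.
Proof. by move=> Hx; apply: sinv_uniq; rewrite sinvP'. Qed.

Lemma sinvzE x : x != 0 -> sinvz x = sinv x.
Proof. by move=> H; rewrite /sinvz (negbTE H). Qed.

Lemma sle_neq0 x y : x != 0 -> x <=s y -> y != 0.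
Proof. by move=> + xy; apply: contraNneq => y0; move: xy; rewrite /sle y0 addr0 => ->. Qed.

Lemma sle_mul_sinv c x y : c != 0 -> (x <=s c * y <-> sinv c * x <=s y).
Proof.
move=> c0; split=> [/(sle_mull (sinv c)) | /(sle_mull c)].
  by rewrite mulrA sinvP' // mul1r.
by rewrite mulrA sinvP // mul1r.
Qed.

Lemma one_sle_expr c k : 1 <=s c -> c <=s c ^+ k.+1.
Proof.
move=> c1; rewrite exprS -{1}(mulr1 c); apply: sle_mull.
by rewrite -(expr1n X k); apply: sle_expr.
Qed.

(* Write x = c y with 1 <= c: then c^k = 1 forces c = 1. *)
Lemma expr_inj_sle x y k : (0 < k)%N -> x ^+ k = y ^+ k -> y <=s x -> x = y.
Proof.
case: k => // k _ E yx.
have [y0 | yn0] := eqVneq y 0.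
  move: E; rewrite y0 expr0n /= => E; apply/eqP; apply: contraT => /(expr_neq0 k.+1).
  by rewrite E eqxx.
pose c := x * sinv y.
have c1 : 1 <=s c by rewrite /c -(sinvP yn0); apply: sle_mulr.
have ck : c ^+ k.+1 = 1 by rewrite exprMn E -exprMn sinvP // expr1n.
have c_eq1 : c = 1 by apply: sle_anti; [rewrite -ck; apply: one_sle_expr|].
by rewrite -[x]mulr1 -(sinvP' yn0) mulrA -/c c_eq1 mul1r.
Qed.

Lemma expr_sle_inv x y k : (0 < k)%N -> x ^+ k <=s y ^+ k -> x <=s y.
Proof.
move=> k0 H; case: (sle_total x y) => // yx.
have E : x ^+ k = y ^+ k by apply: sle_anti => //; apply: sle_expr.
by rewrite (expr_inj_sle k0 E yx); apply: sle_refl.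
Qed.

Lemma srootP k (a : X) : (0 < k)%N -> sroot k a ^+ k = a.
Proof. by move=> /(alg_complete a); apply: epsilon_spec. Qed.

Section Matrices.
Variable n : nat.
Implicit Types (M N : 'M[X]_n) (u v : 'cV[X]_n).

Definition vle u v := forall i, u i 0 <=s v i 0.
Local Notation "u <=v v" := (vle u v) (at level 70).

Lemma mulmx_vle_r M u v : u <=v v -> M *m u <=v M *m v.
Proof. by move=> uv k; rewrite !mxE; apply: sle_sum => l _; apply: sle_mull. Qed.

Lemma mulmx_vle_l M N v :
  (forall i j, M i j <=s N i j) -> M *m v <=v N *m v.
Proof. by move=> MN k; rewrite !mxE; apply: sle_sum => l _; apply: sle_mulr. Qed.

Lemma mulmx_vle_iff M u v :
  M *m u <=v v <-> forall k l, M k l * u l 0 <=s v k 0.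
Proof.
split=> [Muv k l | H k].
  apply: sle_trans (Muv k); rewrite mxE.
  exact: (sle_sum_term (fun l => M k l * u l 0)).
by rewrite mxE; apply: sle_sum_bound => l _; apply: H.
Qed.

Lemma mxpow0 M : mxpow M 0 = 1%:M. Proof. by []. Qed.

Lemma mxpowS M k : mxpow M k.+1 = mxpow M k *m M. Proof. by []. Qed.

Lemma mxpowSl M k : mxpow M k.+1 = M *m mxpow M k.
Proof.
elim: k => [|k IH]; first by rewrite mxpowS mxpow0 mul1mx mulmx1.
by rewrite [LHS]mxpowS [in LHS]IH -mulmxA -mxpowS.
Qed.

Lemma path_prod_sle_mxpow M k (p : nat -> 'I_n) :
  \prod_(t < k) M (p t) (p t.+1) <=s mxpow M k (p 0%N) (p k).
Proof.
elim: k => [|k IH].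
  by rewrite big_ord0 mxpow0 mxE eqxx mulr1n; apply: sle_refl.
rewrite big_ord_recr mxpowS mxE /=.
apply: sle_trans (sle_mulr _ IH) _.
exact: (sle_sum_term (fun l => mxpow M k (p 0%N) l * M l (p k.+1)) (p k)).
Qed.

Lemma mxpow_sle_path_prod M k i j : mxpow M k i j != 0 ->
  exists p : nat -> 'I_n, [/\ p 0%N = i, p k = j &
    mxpow M k i j <=s \prod_(t < k) M (p t) (p t.+1)].
Proof.
elim: k j => [|k IH] j.
  rewrite mxpow0 mxE; have [<- _ | _] := eqVneq i j; last by rewrite mulr0n eqxx.
  by exists (fun=> i); split; rewrite // big_ord0; apply: sle_refl.
rewrite mxpowS mxE; have [l ->] := sum_eq_term (fun l => mxpow M k i l * M l j) i.
move=> /mul_neq0l /IH [p [p0 pk Hp]].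
exists (fun t => if t == k.+1 then j else p t); split; rewrite ?eqxx ?p0 //.
rewrite big_ord_recr /= eqxx ltn_eqF // pk; apply: sle_mulr.
apply: (sle_trans Hp); apply: sle_prod => t _.
have tk : (t < k)%N := ltn_ord t.
by rewrite !ltn_eqF ?(ltn_trans tk) //; apply: sle_refl.
Qed.

Lemma mxstar_mulmx_sum M u k : (mxstar M *m u) k 0 = \sum_(r < n) (mxpow M r *m u) k 0.
Proof. by rewrite /mxstar mulmx_suml summxE. Qed.

Section CyclesAtMostOne.
Variable C : 'M[X]_n.
Hypothesis cycles_le1 : forall (j : 'I_n) (s : {ffun 'I_j.+1 -> 'I_n}),
  \prod_(t < j.+1) C (s t) (s (ordS t)) <=s 1.

Lemma cycle_segment_sle1 (p : nat -> 'I_n) a d :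
  (0 < d <= n)%N -> p a = p (a + d)%N -> \prod_(a <= t < a + d) C (p t) (p t.+1) <=s 1.
Proof.
case: d => // d /andP [_ jn] pad.
pose s : {ffun 'I_d.+1 -> 'I_n} := [ffun t : 'I_d.+1 => p (t + a)%N].
have -> : \prod_(a <= t < a + d.+1) C (p t) (p t.+1) = \prod_(t < d.+1) C (s t) (s (ordS t)).
  rewrite -{1}(add0n a) big_addn addKn big_mkord; apply: eq_bigr => t _.
  rewrite !ffunE /=; congr (C _ _).
  have [td | dt] := ltnP t d; first by rewrite modn_small.
  have -> : nat_of_ord t = d by apply/eqP; rewrite eqn_leq dt -ltnS ltn_ord.
  by rewrite modnn add0n addnC pad addnS.
exact: (@cycles_le1 (Ordinal jn) s).
Qed.

(* Cutting the cycle p a, ..., p (a + d) out of the path leaves a path of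
   length n - d < n with the same ends. *)
Lemma path_with_cycle_sle_mxstar (p : nat -> 'I_n) a d :
  (0 < d)%N -> (a + d <= n)%N -> p a = p (a + d)%N ->
  \prod_(t < n) C (p t) (p t.+1) <=s mxstar C (p 0%N) (p n).
Proof.
move=> d0 adn pad.
pose F t := C (p t) (p t.+1).
pose q t := if (t <= a)%N then p t else p (t + d)%N.
have qE t : (a <= t)%N -> q t = p (t + d)%N.
  by rewrite /q; case: ltngtP => // <- _; rewrite pad addnC.
have dn : (d <= n)%N by apply: leq_trans adn; apply: leq_addl.
have kn : (n - d < n)%N by rewrite ltn_subrL d0 (leq_trans d0 dn).
have a_le : (a <= n - d)%N by rewrite leq_subRL // addnC.
have Fsplit : \prod_(t < n) F t =
    \prod_(0 <= t < a) F t * (\prod_(a <= t < a + d) F t * \prod_(a + d <= t < n) F t).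
  rewrite -(big_mkord xpredT F) (big_cat_nat (leq0n a) (leq_trans (leq_addr d a) adn)).
  by rewrite (big_cat_nat (leq_addr d a) adn).
have Fspliced : \prod_(t < n - d) C (q t) (q t.+1) =
    \prod_(0 <= t < a) F t * \prod_(a + d <= t < n) F t.
  rewrite -(big_mkord xpredT (fun t => C (q t) (q t.+1))) (big_cat_nat (leq0n a) a_le).
  congr (_ * _); first by apply: eq_big_nat => t /andP [_ ta]; rewrite /q (ltnW ta) ta.
  rewrite [in RHS]big_addn; apply: eq_big_nat => t /andP [a_t _].
  by rewrite /F !qE // ?(leq_trans a_t) // addSn.
rewrite Fsplit; apply: (@sle_trans _ (\prod_(0 <= t < a) F t * (1 * \prod_(a + d <= t < n) F t))).
  by apply/sle_mull/sle_mulr/cycle_segment_sle1; rewrite ?d0.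
rewrite mul1r -Fspliced; apply: sle_trans (path_prod_sle_mxpow C (n - d) q) _.
rewrite (qE _ a_le) subnK // [q 0%N]/q leq0n /mxstar summxE.
exact: (sle_sum_term (fun r : 'I_n => mxpow C r (p 0%N) (p n)) (Ordinal kn)).
Qed.

(* A path of length n visits n.+1 vertices, so some vertex is repeated. *)
Lemma mxpow_sle_mxstar i j : mxpow C n i j <=s mxstar C i j.
Proof.
have [-> | /mxpow_sle_path_prod [p [<- <- Hp]]] := eqVneq (mxpow C n i j) 0.
  exact: sle0.
apply: (sle_trans Hp).
have /injectivePn [s [t st pst]] : ~~ injectiveb (fun t : 'I_n.+1 => p t).
  by apply/injectiveP => /leq_card; rewrite !card_ord ltnn.
wlog lt_st : s t st pst / (s < t)%N.
  move=> H; case: (ltngtP s t) => [| ts | /val_inj e]; first exact: H.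
    by apply: (H t s); rewrite // eq_sym.
  by rewrite e eqxx in st.
have le_st := ltnW lt_st.
apply: (path_with_cycle_sle_mxstar (a := s) (d := t - s)); rewrite ?subn_gt0 ?subnKC //.
by rewrite -ltnS ltn_ord.
Qed.

Lemma mulmx_mxstar_sle i j : (C *m mxstar C) i j <=s mxstar C i j.
Proof.
rewrite {1}/mxstar mulmx_sumr summxE; apply: sle_sum_bound => r _.
rewrite -mxpowSl; have [rn | ] := ltnP r.+1 n.
  by rewrite /mxstar summxE; exact: (sle_sum_term (fun r : 'I_n => mxpow C r i j) (Ordinal rn)).
move=> nr; have -> : r.+1 = n by apply/eqP; rewrite eqn_leq nr ltn_ord.
exact: mxpow_sle_mxstar.
Qed.

Lemma mxstar_mulmx_subeigen u : C *m (mxstar C *m u) <=v mxstar C *m u.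
Proof. by rewrite mulmxA; apply: mulmx_vle_l; apply: mulmx_mxstar_sle. Qed.

Hypothesis n_pos : (0 < n)%N.
Hypothesis C_neq0 : forall i j, C i j != 0.

Lemma mxstar_mulmx_sle u : u <=v mxstar C *m u.
Proof.
move=> k; rewrite mxstar_mulmx_sum.
by apply: sle_trans (sle_sum_term _ (Ordinal n_pos)); rewrite mul1mx; apply: sle_refl.
Qed.

Lemma subeigen_mxstar_fixed (x : 'cV[X]_n) : C *m x <=v x -> mxstar C *m x = x.
Proof.
move=> Cx; have Crx r : mxpow C r *m x <=v x.
  elim: r => [|r IH] k; first by rewrite mul1mx; apply: sle_refl.
  by rewrite mxpowS -mulmxA; apply: sle_trans (mulmx_vle_r _ Cx k) (IH k).
apply/matrixP => k j; rewrite ord1; apply: sle_anti; last exact: mxstar_mulmx_sle.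
by rewrite mxstar_mulmx_sum; apply: sle_sum_bound => r _; apply: Crx.
Qed.

(* A nonzero entry of u spreads to every entry through the positive matrix C. *)
Lemma mxstar_mulmx_regular u : u != 0 -> regular (mxstar C *m u).
Proof.
case/cV0Pn => v uv k; apply/eqP.
have Cv := (mulmx_vle_iff C _ _).1 (mxstar_mulmx_subeigen u) k v.
exact: sle_neq0 (mul_neq0 (C_neq0 k v) (sle_neq0 uv (mxstar_mulmx_sle u v))) Cv.
Qed.

Lemma regular_subeigenP (x : 'cV[X]_n) :
  regular x /\ C *m x <=v x <-> exists u, u != 0 /\ x = mxstar C *m u.
Proof.
split=> [[xr Cx] | [u [u0 ->]]].
  exists x; split; last by rewrite subeigen_mxstar_fixed.
  by apply/cV0Pn; exists (Ordinal n_pos); apply/eqP.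
by split; [apply: mxstar_mulmx_regular | apply: mxstar_mulmx_subeigen].
Qed.

End CyclesAtMostOne.

(* The scalar x^- B x, written out for regular x. *)
Definition conj_form (B : 'M[X]_n) (x : 'cV[X]_n) : X :=
  \sum_k \sum_l sinv (x k 0) * B k l * x l 0.

Lemma conj_form_term_sle M (x : 'cV[X]_n) k l :
  sinv (x k 0) * M k l * x l 0 <=s conj_form M x.
Proof.
apply: sle_trans (sle_sum_term _ k).
exact: (sle_sum_term (fun l => sinv (x k 0) * M k l * x l 0) l).
Qed.

Lemma outer_vconjE (x : 'cV[X]_n) :
  regular x -> forall k l, (x *m vconj x) k l = x k 0 * sinv (x l 0).
Proof. by move=> xr k l; rewrite mxE big_ord1 mxE sinvzE //; apply/eqP. Qed.

Lemma mconj_outer_vconj (x : 'cV[X]_n) : regular x -> mconj (x *m vconj x) = x *m vconj x.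
Proof.
move=> xr; have xr' i : x i 0 != 0 by apply/eqP.
apply/matrixP => k l; rewrite mxE !outer_vconjE // sinvzE ?mul_neq0 ?sinv_neq0 //.
by rewrite sinvM ?sinv_neq0 // sinvK // mulrC.
Qed.

Lemma mxtrace_outer_vconj M (x : 'cV[X]_n) :
  regular x -> \tr (x *m vconj x *m M) = conj_form M x.
Proof.
move=> xr; rewrite /mxtrace /conj_form exchange_big; apply: eq_bigr => k _.
by rewrite mxE; apply: eq_bigr => i _; rewrite outer_vconjE // [RHS]mulrC mulrA.
Qed.

Lemma mdist_outer_vconj M (x : 'cV[X]_n) :
  regular x -> mdist M (x *m vconj x) = conj_form (M + mconj M) x.
Proof.
move=> xr; rewrite /mdist mconj_outer_vconj // [X in _ + X]mxtrace_mulC.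
by rewrite -mxtraceD -mulmxDr mxtrace_outer_vconj.
Qed.

End Matrices.

Lemma objective_conj_form n m (A : 'I_m -> 'M[X]_n) (w : 'I_m -> X) (x : 'cV[X]_n) :
  regular x -> \sum_(i < m) w i * mdist (A i) (x *m vconj x) =
               conj_form (\sum_(i < m) w i *: (A i + mconj (A i))) x.
Proof.
move=> xr; rewrite -mxtrace_outer_vconj // mulmx_sumr raddf_sum; apply: eq_bigr => i _.
by rewrite -scalemxAr /= mxtraceZ mxtrace_outer_vconj // mdist_outer_vconj.
Qed.

Section SpectralRadius.
Variable n : nat.
Variable B : 'M[X]_n.
Local Notation mu := (specrad B).
Local Notation "u <=v v" := (vle u v) (at level 70).

Lemma cycle_sle_specrad_expr (j : 'I_n) (s : {ffun 'I_j.+1 -> 'I_n}) :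
  \prod_(t < j.+1) B (s t) (s (ordS t)) <=s mu ^+ j.+1.
Proof.
rewrite -(srootP (\prod_(t < j.+1) B (s t) (s (ordS t))) (ltn0Sn j)); apply: sle_expr.
apply: sle_trans (sle_sum_term _ j).
exact: (sle_sum_term (fun s : {ffun 'I_j.+1 -> 'I_n} =>
  sroot j.+1 (\prod_(t < j.+1) B (s t) (s (ordS t)))) s).
Qed.

(* Along a cycle the factors x_k and x_l^{-1} cancel. *)
Lemma specrad_sle_of_terms (x : 'cV[X]_n) c : regular x ->
  (forall k l, sinv (x k 0) * B k l * x l 0 <=s c) -> mu <=s c.
Proof.
move=> xr H; have xr' i : x i 0 != 0 by apply/eqP.
have B_sle k l : B k l <=s c * x k 0 * sinv (x l 0).
  have := sle_mulr (x k 0 * sinv (x l 0)) (H k l).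
  have -> : sinv (x k 0) * B k l * x l 0 * (x k 0 * sinv (x l 0)) =
            B k l * (x k 0 * sinv (x k 0)) * (x l 0 * sinv (x l 0)) by ring.
  by rewrite !sinvP // !mulr1 !mulrA.
apply: sle_sum_bound => j _; apply: sle_sum_bound => s _.
apply: (@expr_sle_inv _ _ j.+1) => //; rewrite srootP //.
apply: (sle_trans (sle_prod _ (fun t _ => B_sle (s t) (s (ordS t))))).
rewrite !big_split /= prodr_const card_ord -mulrA.
have -> : \prod_(t < j.+1) sinv (x (s (ordS t)) 0) = \prod_(t < j.+1) sinv (x (s t) 0).
  by rewrite [RHS](reindex_inj (@ordS_inj j.+1)).
rewrite -big_split big1 /= => [|t _]; last exact: sinvP.
by rewrite mulr1; apply: sle_refl.
Qed.

Lemma specrad_sle_conj_form (x : 'cV[X]_n) : regular x -> mu <=s conj_form B x.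
Proof. by move=> xr; apply: (specrad_sle_of_terms xr) => k l; apply: conj_form_term_sle. Qed.

Hypothesis n_pos : (0 < n)%N.
Hypothesis B_neq0 : forall i j, B i j != 0.

Lemma specrad_neq0 : mu != 0.
Proof.
have := @cycle_sle_specrad_expr (Ordinal n_pos) [ffun=> Ordinal n_pos].
by rewrite big_ord1 !ffunE expr1; apply: sle_neq0.
Qed.

Lemma scaled_neq0 i j : (sinv mu *: B) i j != 0.
Proof. by rewrite mxE mul_neq0 ?sinv_neq0 ?specrad_neq0. Qed.

Lemma scaled_cycles_sle1 (j : 'I_n) (s : {ffun 'I_j.+1 -> 'I_n}) :
  \prod_(t < j.+1) (sinv mu *: B) (s t) (s (ordS t)) <=s 1.
Proof.
under eq_bigr do rewrite mxE.
rewrite big_split /= prodr_const card_ord.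
apply: (@sle_trans _ (sinv mu ^+ j.+1 * mu ^+ j.+1)).
  by apply: sle_mull; apply: cycle_sle_specrad_expr.
by rewrite -exprMn sinvP' ?specrad_neq0 // expr1n; apply: sle_refl.
Qed.

Lemma term_sle_specrad_iff (x : 'cV[X]_n) k l : x k 0 != 0 ->
  sinv (x k 0) * B k l * x l 0 <=s mu <-> (sinv mu *: B) k l * x l 0 <=s x k 0.
Proof.
move=> xk; rewrite mxE -!mulrA.
split=> [/(sle_mul_sinv _ _ xk).2 | /(sle_mul_sinv _ _ specrad_neq0).2] H.
  by apply: (sle_mul_sinv _ _ specrad_neq0).1; rewrite [mu * _]mulrC.
by apply: (sle_mul_sinv _ _ xk).1; rewrite [x k 0 * _]mulrC.
Qed.

Lemma conj_form_eq_specrad (x : 'cV[X]_n) : regular x ->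
  conj_form B x = mu <-> (sinv mu *: B) *m x <=v x.
Proof.
move=> xr; have xr' i : x i 0 != 0 by apply/eqP.
split=> [form_mu | /mulmx_vle_iff Bx].
  apply/mulmx_vle_iff => k l; apply/term_sle_specrad_iff => //.
  by rewrite -form_mu; apply: conj_form_term_sle.
apply: sle_anti; last exact: specrad_sle_conj_form.
by apply: sle_sum_bound => k _; apply: sle_sum_bound => l _; apply/term_sle_specrad_iff.
Qed.

Lemma specrad_solutionsP (x : 'cV[X]_n) :
  regular x /\ conj_form B x = mu <->
  exists u, u != 0 /\ x = mxstar (sinv mu *: B) *m u.
Proof.
apply: iff_trans (regular_subeigenP scaled_cycles_sle1 n_pos scaled_neq0 x).
by split=> -[xr H]; split; rewrite // ?conj_form_eq_specrad // in H *.
Qed.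

End SpectralRadius.
End IdempotentSemifield.

Theorem theorem3 (X : comNzSemiRingType)
  (add_idem : forall x : X, x + x = x)
  (mul_inv : forall x : X, x != 0 -> exists y : X, x * y = 1)
  (lin_order : forall x y : X, x + y = x \/ x + y = y)
  (alg_complete : forall (a : X) (p : nat), (0 < p)%N -> exists x : X, x ^+ p = a)
  (n m : nat) (n_pos : (0 < n)%N)
  (A : 'I_m -> 'M[X]_n) (w : 'I_m -> X) :
  let B : 'M[X]_n := \sum_(i < m) w i *: (A i + mconj (A i)) in
  (forall i j, B i j != 0) ->
  let mu := specrad B in
  let Bmu := sinv mu *: B in
  let f := fun x : 'cV[X]_n => \sum_(i < m) w i * mdist (A i) (x *m vconj x) in
  (* the minimum value equals mu *)
  ((exists x : 'cV[X]_n, regular x /\ f x = mu) /\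
   (forall x : 'cV[X]_n, regular x -> sle mu (f x))) /\
  (* the set of all solutions *)
  (forall x : 'cV[X]_n,
     (regular x /\ f x = mu) <->
     (exists u : 'cV[X]_n, u != 0 /\ x = mxstar Bmu *m u)).
Proof.
move=> B B_neq0 mu Bmu f.
have f_form x : regular x -> f x = conj_form B x := objective_conj_form mul_inv A w (x := x).
have solP x : regular x /\ f x = mu <-> exists u, u != 0 /\ x = mxstar Bmu *m u.
  apply: iff_trans (specrad_solutionsP add_idem mul_inv lin_order alg_complete n_pos B_neq0 x).
  by split=> -[xr H]; rewrite f_form in H *.
split; [split | exact: solP].
- have one_neq0 : const_mx 1 != 0 :> 'cV[X]_n.
    by apply/cV0Pn; exists (Ordinal n_pos); rewrite mxE oner_eq0.
  by exists (mxstar Bmu *m const_mx 1); apply/solP; exists (const_mx 1).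
- move=> x xr; rewrite f_form //.
  exact: (specrad_sle_conj_form add_idem mul_inv lin_order alg_complete B).
Qed.
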